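(* Let $R\subseteq\{0,1\}^V$ be a relation that is not closed under joins (there exist $x,y\in R$ with $x\vee y\notin R$), but such that every pinning $R_p$ with $\mathrm{dom}(p)\ne\emptyset$ is closed under joins. Then there is a configuration $x$ with $R=\{\mathbf 0,x,\overline x\}$ or $R=\{x,\overline x\}$.
   Context: $x\vee y$ is the coordinatewise maximum. A partial configuration $p$ of $V$ is an element of $\{0,1\}^{\mathrm{dom}(p)}$ with $\mathrm{dom}(p)\subseteq V$; the pinning $R_p\subseteq\{0,1\}^{V\setminus\mathrm{dom}(p)}$ is $\{x:(x,p)\in R\}$. $\mathbf 0$ is the all-zero configuration and $\overline x_i=1-x_i$. *)

From mathcomp Require Import all_boot.
Set Implicit Arguments. Unset Strict Implicit. Unset Printing Implicit Defensive.

Definition config (T : finType) := {ffun T -> bool}.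

Definition cjoin (T : finType) (x y : config T) : config T :=
  [ffun i => x i || y i].
Definition ccompl (T : finType) (x : config T) : config T :=
  [ffun i => ~~ x i].
Definition czero (T : finType) : config T := [ffun => false].

Definition join_closed (T : finType) (R : {set config T}) : Prop :=
  forall x y, x \in R -> y \in R -> cjoin x y \in R.

(* A partial configuration p of V: p v = Some b if v \in dom(p) with value b,
   p v = None if v \notin dom(p). *)
Definition pconfig (V : finType) := {ffun V -> option bool}.
Definition pdom (V : finType) (p : pconfig V) : {set V} :=
  [set v | p v != None].

Definition free_vars (V : finType) (p : pconfig V) : finType :=
  {v : V | p v == None}.

(* (x, p) : the full configuration obtained by combining x and p *)
Definition glue (V : finType) (p : pconfig V) (x : config (free_vars p))
  : config V :=
  [ffun v => if insub v is Some s then x s else odflt false (p v)].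

Definition pinning (V : finType) (R : {set config V}) (p : pconfig V)
  : {set config (free_vars p)} :=
  [set x | glue x \in R].

From mathcomp Require Import all_boot.
Set Implicit Arguments. Unset Strict Implicit. Unset Printing Implicit Defensive.

(* Call x, y in R a bad pair if x \/ y is not in R.
   (1) If x, y in R agree at some coordinate v, pinning v to that common value
       gives a relation R_p with nonempty domain that contains the
       restrictions of x and y; it is join-closed, and since x \/ y has the
       same value at v, x \/ y lies in R.  Hence a bad pair disagrees
       everywhere: y = ~x.
   (2) Fix a bad pair (x, ~x).  Any other z in R forms good pairs with x and
       ~x, so z \/ x and z \/ ~x lie in R; their join is x \/ ~x, which is not
       in R, so by (1) z \/ ~x = ~(z \/ x), which forces z = 0.
   Thus R is {x, ~x} or {0, x, ~x}. *)

Lemma ccomplK (T : finType) (x : config T) : ccompl (ccompl x) = x.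
Proof. by apply/ffunP => v; rewrite !ffunE negbK. Qed.

Section Restriction.
Variables (V : finType) (p : pconfig V).

Definition restrict (x : config V) : config (free_vars p) :=
  [ffun s => x (val s)].

Definition extends (x : config V) : Prop :=
  forall u b, p u = Some b -> x u = b.

Lemma glue_restrict (x : config V) : extends x -> glue (restrict x) = x.
Proof.
move=> ext_x; apply/ffunP => u; rewrite !ffunE.
case: insubP => [s _ <-|]; first by rewrite ffunE.
by case pu: (p u) => [b|] //= _; rewrite (ext_x _ _ pu).
Qed.

Lemma restrict_join (x y : config V) :
  cjoin (restrict x) (restrict y) = restrict (cjoin x y).
Proof. by apply/ffunP => s; rewrite !ffunE. Qed.

Lemma restrict_pinning (R : {set config V}) (x : config V) :
  extends x -> (restrict x \in pinning R p) = (x \in R).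
Proof. by move=> ext_x; rewrite inE glue_restrict. Qed.

End Restriction.

Definition pin1 (V : finType) (v : V) (b : bool) : pconfig V :=
  [ffun u => if u == v then Some b else None].

Lemma pdom_pin1 (V : finType) (v : V) (b : bool) : pdom (pin1 v b) != set0.
Proof. by apply/set0Pn; exists v; rewrite inE ffunE eqxx. Qed.

Lemma extends_pin1 (V : finType) (v : V) (b : bool) (x : config V) :
  x v = b -> extends (pin1 v b) x.
Proof. by move=> xv u c; rewrite ffunE; case: eqP => // -> [<-]. Qed.

Section PinnedJoinClosed.
Variables (V : finType) (R : {set config V}).
Hypothesis pinned_closed :
  forall p : pconfig V, pdom p != set0 -> join_closed (pinning R p).

Lemma join_agreeing (x y : config V) (v : V) :
  x \in R -> y \in R -> x v = y v -> cjoin x y \in R.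
Proof.
move=> xR yR xy_v; pose p := pin1 v (x v).
have ext_x : extends p x by exact: extends_pin1.
have ext_y : extends p y by apply: extends_pin1; rewrite xy_v.
have ext_xy : extends p (cjoin x y) by apply: extends_pin1; rewrite ffunE -xy_v orbb.
rewrite -(restrict_pinning R ext_xy) -restrict_join.
by apply: (pinned_closed (pdom_pin1 v (x v)));
  rewrite restrict_pinning.
Qed.

Lemma bad_pair_compl (x y : config V) :
  x \in R -> y \in R -> cjoin x y \notin R -> y = ccompl x.
Proof.
move=> xR yR bad; apply/ffunP => v; rewrite ffunE.
case xy_v: (x v == y v); last by move: xy_v; case: (x v); case: (y v).
by rewrite (join_agreeing xR yR (eqP xy_v)) in bad.
Qed.

Lemma other_member_zero (x z : config V) :
  x \in R -> ccompl x \in R -> cjoin x (ccompl x) \notin R -> z \in R ->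
  z != x -> z != ccompl x -> z = czero V.
Proof.
move=> xR cxR bad zR zx zcx.
have zxR : cjoin z x \in R.
  apply/negPn/negP => /(bad_pair_compl zR xR) x_cz.
  by rewrite x_cz ccomplK eqxx in zcx.
have zcxR : cjoin z (ccompl x) \in R.
  apply/negPn/negP => /(bad_pair_compl zR cxR) /(congr1 (@ccompl V)).
  by rewrite !ccomplK => xz; rewrite xz eqxx in zx.
have joins : cjoin (cjoin z x) (cjoin z (ccompl x)) = cjoin x (ccompl x).
  by apply/ffunP => v; rewrite !ffunE; case: (z v); case: (x v).
have bad_zs : cjoin (cjoin z x) (cjoin z (ccompl x)) \notin R by rewrite joins.
have /ffunP compl := bad_pair_compl zxR zcxR bad_zs.
apply/ffunP => v; move: (compl v); rewrite !ffunE.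
by case: (z v); case: (x v).
Qed.

End PinnedJoinClosed.

Lemma not_join_closed_bad_pair (T : finType) (R : {set config T}) :
  ~ join_closed R -> exists x y, [/\ x \in R, y \in R & cjoin x y \notin R].
Proof.
move=> not_closed.
case: (boolP [exists x, exists y, [&& x \in R, y \in R & cjoin x y \notin R]]).
  by case/existsP => x /existsP [y /and3P [xR yR bad]]; exists x, y.
move/negP => no_bad; case: not_closed => x y xR yR.
apply/negPn/negP => bad; apply: no_bad.
by apply/existsP; exists x; apply/existsP; exists y; rewrite xR yR bad.
Qed.

Theorem mainTheorem9 (V : finType) (R : {set config V}) :
  ~ join_closed R ->
  (forall p : pconfig V, pdom p != set0 -> join_closed (pinning R p)) ->
  exists x : config V,
    R = [set czero V; x; ccompl x] \/ R = [set x; ccompl x].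
Proof.
move=> not_closed pinned_closed.
have [x [y [xR yR bad]]] := not_join_closed_bad_pair not_closed.
have y_cx := bad_pair_compl pinned_closed xR yR bad; subst y.
have members z : z \in R -> [|| z == czero V, z == x | z == ccompl x].
  move=> zR; case: (eqVneq z x) => [|zx]; first by rewrite orbT.
  case: (eqVneq z (ccompl x)) => [|zcx]; first by rewrite !orbT.
  by rewrite (other_member_zero pinned_closed xR yR bad zR zx zcx) eqxx.
exists x; case: (boolP (czero V \in R)) => zeroR; [left | right];
  apply/setP => z; rewrite !inE; apply/idP/idP.
- by rewrite -orbA; apply: members.
- by move=> /orP [/orP [] | ] /eqP ->.
- move=> zR; case/or3P: (members z zR) => [/eqP z0 | -> | ->]; rewrite ?orbT //.
  by rewrite -z0 zR in zeroR.
- by case/orP => /eqP ->.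
Qed.
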